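(* Let $X$ be a set of pointed Kripke models and $\Lambda$ a normal modal logic sound with respect to $X$. Every clean map $\boldsymbol{f}$ on the modal space $X_{\boldsymbol{\mathcal{L}}_{\Lambda}}$ is total and well-defined: for every precondition finite multi-pointed action model $\Sigma\Gamma$ closing, deterministic and exhaustive over $X$, and every $\boldsymbol{x}\in X_{\boldsymbol{\mathcal{L}}_{\Lambda}}$, the class of $x\otimes\Sigma\Gamma$ in $X_{\boldsymbol{\mathcal{L}}_{\Lambda}}$ exists and does not depend on the choice of representative $x\in\boldsymbol{x}$.
   Context: Signature: countable non-empty sets $\Phi$, $\mathcal{I}$; $\mathcal{L}$: $\varphi ::= \top\mid p\mid\neg\varphi\mid\varphi\wedge\varphi\mid\Box_i\varphi$ on pointed Kripke models (countable non-empty state sets, relations $R_i$, atom valuations), standard semantics. $\boldsymbol{\varphi}$: formulas $\Lambda$-provably equivalent to $\varphi$; $X_{\boldsymbol{\mathcal{L}}_{\Lambda}}=\{\boldsymbol{x}:x\in X\}$ with $\boldsymbol{x}=\{y\in X:y\models\varphi\iff x\models\varphi\ \forall\varphi\in\mathcal{L}\}$. A multi-pointed action model is $\Sigma\Gamma=(\llbracket\Sigma\rrbracket,\mathsf{R},pre,post,\Gamma)$: countable non-empty action set, relations $\mathsf{R}_i$ ($i\in\mathcal{I}$), $pre,post:\llbracket\Sigma\rrbracket\to\mathcal{L}$ with each $post(\sigma)$ either $\top$ or a conjunction of literals, $\emptyset\neq\Gamma\subseteq\llbracket\Sigma\rrbracket$. Precondition finite: $\{\boldsymbol{pre(\sigma)}:\sigma\in\llbracket\Sigma\rrbracket\}$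 finite. Exhaustive over $X$: each $x\in X$ satisfies $pre(\sigma)$ for some $\sigma\in\Gamma$. Deterministic over $X$: each $x\in X$ satisfies $pre(\sigma)\wedge pre(\sigma')\to\bot$ for $\sigma\neq\sigma'\in\Gamma$. Product update $Ms\otimes\Sigma\Gamma$: states $\{(s,\sigma):Ms\models pre(\sigma)\}$, $R'_i=\{((s,\sigma),(t,\tau)):(s,t)\in R_i,(\sigma,\tau)\in\mathsf{R}_i\}$, $\llbracket p\rrbracket'=\{(s,\sigma):s\in\llbracket p\rrbracket,post(\sigma)\not\models\neg p\}\cup\{(s,\sigma):post(\sigma)\models p\}$, designated state $(s,\sigma)$ with $\sigma\in\Gamma$, $Ms\models pre(\sigma)$. Closing over $X$: $x\otimes\Sigma\Gamma\in X$ for all $x\in X$. A map $\boldsymbol{f}$ on $X_{\boldsymbol{\mathcal{L}}_{\Lambda}}$ is clean if such a precondition finite $\Sigma\Gamma$, closing, deterministic and exhaustive over $X$, satisfies $\boldsymbol{f}(\boldsymbol{x})=\boldsymbol{y}$ iff $x\otimes\Sigma\Gamma\in\boldsymbol{y}$. *)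

From Stdlib Require Import List.
Set Implicit Arguments.

Section Logic.
Variables (Phi I : Type).

Inductive form : Type :=
| Top : form
| Atom : Phi -> form
| Neg : form -> form
| And : form -> form -> form
| Box : I -> form -> form.

Definition Bot : form := Neg Top.
Definition Imp (a b : form) : form := Neg (And a (Neg b)).
Definition Iff (a b : form) : form := And (Imp a b) (Imp b a).

Definition countable (T : Type) : Prop := exists f : T -> nat, forall a b, f a = f b -> a = b.

(* Kripke models (the state set is the carrier type; it is non-empty since a
   pointed model has a designated state) *)
Record kmodel : Type := KModel {
  St : Type;
  Rel : I -> St -> St -> Prop;
  Val : Phi -> St -> Prop }.

Record pmodel : Type := PModel { pm : kmodel; pt : St pm }.

Fixpoint sat (M : kmodel) (s : St M) (f : form) : Prop :=
  match f with
  | Top => True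
  | Atom p => Val M p s
  | Neg g => ~ sat M s g
  | And g h => sat M s g /\ sat M s h
  | Box i g => forall t, Rel M i s t -> sat M t g
  end.

Definition psat (x : pmodel) (f : form) : Prop := sat (pm x) (pt x) f.

Definition entails (f g : form) : Prop :=
  forall (M : kmodel) (s : St M), sat M s f -> sat M s g.

Definition modeq (x y : pmodel) : Prop := forall f, psat x f <-> psat y f.
Definition mclass (X : pmodel -> Prop) (x : pmodel) : pmodel -> Prop :=
  fun y => X y /\ modeq x y.

Fixpoint peval (v : form -> Prop) (f : form) : Prop :=
  match f with
  | Top => True
  | Atom p => v (Atom p)
  | Neg g => ~ peval v g
  | And g h => peval v g /\ peval v h
  | Box i g => v (Box i g)
  end.
Definition tautology (f : form) : Prop := forall v, peval v f.

Fixpoint subst (s : Phi -> form) (f : form) : form :=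
  match f with
  | Top => Top
  | Atom p => s p
  | Neg g => Neg (subst s g)
  | And g h => And (subst s g) (subst s h)
  | Box i g => Box i (subst s g)
  end.

Definition normal_logic (L : form -> Prop) : Prop :=
  (forall f, tautology f -> L f) /\
  (forall i f g, L (Imp (Box i (Imp f g)) (Imp (Box i f) (Box i g)))) /\
  (forall f g, L (Imp f g) -> L f -> L g) /\
  (forall i f, L f -> L (Box i f)) /\
  (forall s f, L f -> L (subst s f)).

Definition sound (L : form -> Prop) (X : pmodel -> Prop) : Prop :=
  forall f, L f -> forall x, X x -> psat x f.

Inductive literal : form -> Prop :=
| lit_pos : forall p, literal (Atom p)
| lit_neg : forall p, literal (Neg (Atom p)).

Inductive conj_literals : form -> Prop :=
| cl_lit : forall f, literal f -> conj_literals f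
| cl_and : forall f g, conj_literals f -> conj_literals g -> conj_literals (And f g).

Record amodel : Type := AModel {
  Act : Type;
  ARel : I -> Act -> Act -> Prop;
  pre : Act -> form;
  post : Act -> form;
  Gam : Act -> Prop }.

Definition wf_amodel (A : amodel) : Prop :=
  countable (Act A) /\
  (forall a, post A a = Top \/ conj_literals (post A a)) /\
  (exists a, Gam A a).

Definition pre_finite (L : form -> Prop) (A : amodel) : Prop :=
  exists l : list form, forall a, exists g, In g l /\ L (Iff (pre A a) g).

Definition exhaustive (X : pmodel -> Prop) (A : amodel) : Prop :=
  forall x, X x -> exists a, Gam A a /\ psat x (pre A a).

Definition deterministic (X : pmodel -> Prop) (A : amodel) : Prop :=
  forall x, X x -> forall a b, Gam A a -> Gam A b -> a <> b ->
    psat x (Imp (And (pre A a) (pre A b)) Bot).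

Definition update_model (M : kmodel) (A : amodel) : kmodel :=
  {| St := { p : St M * Act A | sat M (fst p) (pre A (snd p)) };
     Rel := fun i u w =>
       Rel M i (fst (proj1_sig u)) (fst (proj1_sig w)) /\
       ARel A i (snd (proj1_sig u)) (snd (proj1_sig w));
     Val := fun p u =>
       (Val M p (fst (proj1_sig u)) /\
          ~ entails (post A (snd (proj1_sig u))) (Neg (Atom p))) \/
       entails (post A (snd (proj1_sig u))) (Atom p) |}.

Definition updates (x : pmodel) (A : amodel) (y : pmodel) : Prop :=
  exists a (h : sat (pm x) (pt x) (pre A a)),
    Gam A a /\
    y = {| pm := update_model (pm x) A;
           pt := (exist _ (pt x, a) h : St (update_model (pm x) A)) |}.

Definition closing (X : pmodel -> Prop) (A : amodel) : Prop :=
  forall x, X x -> forall y, updates x A y -> X y.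

End Logic.

(** For a fixed action [b], every formula evaluated after the update is
    equivalent to a formula evaluated before it (the reduction of dynamic
    epistemic logic), at least at states validating [L]: preconditions are only
    [L]-provably equivalent to the finitely many guards, and soundness supplies
    the validity of [L] at the points of [X].  In the box case the possibly
    infinitely many [i]-successors of [b] are covered by finitely many guarded
    boxes [Box i (g -> psi)], since the guards [g] and, inductively, the reducts
    [psi] range over finite lists.  Hence modally equivalent points of [X] stay
    equivalent after the update by a common action, and determinism forces
    equivalent points to be updated by the same designated action. *)

From Stdlib Require Import List Classical.
Import ListNotations.

Fixpoint sublists {T : Type} (l : list T) : list (list T) :=
  match l with
  | [] => [[]]
  | x :: xs => sublists xs ++ map (cons x) (sublists xs)
  end.

Lemma sublists_select {T : Type} (l : list T) (R : T -> Prop) :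
  exists S, In S (sublists l) /\ forall z, In z S <-> In z l /\ R z.
Proof.
  induction l as [|x xs [S [HS HSz]]]; simpl.
  - exists []. split; [now left | intros z; simpl; tauto].
  - destruct (classic (R x)) as [Rx | nRx].
    + exists (x :: S). split; [apply in_or_app; right; now apply in_map|].
      intros z. simpl. rewrite HSz. split.
      * intros [<- | Hz]; [split; [now left | exact Rx] | tauto].
      * intros [[<- | Hz] Rz]; [now left | tauto].
    + exists S. split; [now apply in_or_app; left|].
      intros z. rewrite HSz. simpl. split; [tauto|].
      intros [[<- | Hz] Rz]; [contradiction | tauto].
Qed.

Section Semantics.
Context {Phi I : Type}.

Lemma sat_Imp (M : kmodel Phi I) u (f g : form Phi I) :
  sat M u (Imp f g) <-> (sat M u f -> sat M u g).
Proof.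
  simpl. split.
  - intros H Hf. apply NNPP. intros Hg. now apply H.
  - intros H [Hf Hg]. now apply Hg, H.
Qed.

Lemma sat_Iff (M : kmodel Phi I) u (f g : form Phi I) :
  sat M u (Iff f g) <-> (sat M u f <-> sat M u g).
Proof.
  change (sat M u (Imp f g) /\ sat M u (Imp g f) <-> (sat M u f <-> sat M u g)).
  rewrite !sat_Imp. tauto.
Qed.

Definition bigAnd (l : list (form Phi I)) : form Phi I :=
  fold_right (@And Phi I) (Top Phi I) l.

Lemma sat_bigAnd (M : kmodel Phi I) u (l : list (form Phi I)) :
  sat M u (bigAnd l) <-> forall f, In f l -> sat M u f.
Proof.
  induction l as [|f l IH].
  - split; [intros _ g [] | now intros _].
  - change (sat M u f /\ sat M u (bigAnd l) <->
            forall g, In g (f :: l) -> sat M u g).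
    rewrite IH. split.
    + intros [Hf Hl] g [<- | Hg]; auto.
    + intros H. split; [apply H; now left | intros g Hg; apply H; now right].
Qed.

End Semantics.

Section Reduction.
Context {Phi I : Type} {L : form Phi I -> Prop} {A : amodel Phi I}.
Hypothesis L_nec : forall i f, L f -> L (Box i f).

Definition validates (M : kmodel Phi I) (u : St M) : Prop :=
  forall f, L f -> sat M u f.

Lemma validates_Rel {M : kmodel Phi I} {u i v} :
  validates M u -> Rel M i u v -> validates M v.
Proof. intros Hu Ruv f Lf. exact (Hu _ (L_nec i f Lf) v Ruv). Qed.

Lemma validates_pre {M : kmodel Phi I} {v c g} :
  validates M v -> L (Iff (pre A c) g) -> (sat M v (pre A c) <-> sat M v g).
Proof. intros Hv Lc. apply sat_Iff, Hv, Lc. Qed.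

Definition reduces (b : Act A) (phi psi : form Phi I) : Prop :=
  forall M u (h : sat M u (pre A b)), validates M u ->
    (sat (update_model M A) (exist _ (u, b) h) phi <-> sat M u psi).

Definition guarded_boxes (i : I) (S : list (form Phi I * form Phi I)) :
    form Phi I :=
  bigAnd (map (fun z => Box i (Imp (fst z) (snd z))) S).

Lemma reduces_Box i phi b (S : list (form Phi I * form Phi I)) :
  (forall g psi, In (g, psi) S ->
     exists c, ARel A i b c /\ L (Iff (pre A c) g) /\ reduces c phi psi) ->
  (forall c, ARel A i b c ->
     exists g psi, In (g, psi) S /\ L (Iff (pre A c) g) /\ reduces c phi psi) ->
  reduces b (Box i phi) (guarded_boxes i S).
Proof.
  intros HS_sound HS_cover M u h Hu. unfold guarded_boxes. rewrite sat_bigAnd.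
  split.
  - intros H f Hf. apply in_map_iff in Hf as [[g psi] [<- Hin]].
    intros v Ruv. apply sat_Imp. intros Hg.
    destruct (HS_sound _ _ Hin) as (c & Rbc & Lc & Rc).
    assert (Hv : validates M v) by exact (validates_Rel Hu Ruv).
    assert (hv : sat M v (pre A c)) by now apply (validates_pre Hv Lc).
    apply (Rc M v hv Hv), (H (exist _ (v, c) hv)). now split.
  - intros H [[v c] hv] [Ruv Rbc]. simpl in Ruv, Rbc, hv.
    assert (Hv : validates M v) by exact (validates_Rel Hu Ruv).
    destruct (HS_cover c Rbc) as (g & psi & Hin & Lc & Rc).
    apply (Rc M v hv Hv).
    apply sat_Imp with (f := g).
    + apply (H (Box i (Imp g psi))); [|exact Ruv].
      exact (in_map (fun z => Box i (Imp (fst z) (snd z))) S (g, psi) Hin).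
    + now apply (validates_pre Hv Lc).
Qed.

Hypothesis A_pre_finite : pre_finite L A.

Lemma reducts_finite (phi : form Phi I) :
  exists Ps, forall b, exists psi, In psi Ps /\ reduces b phi psi.
Proof.
  induction phi as [|p|phi [Ps HPs]|phi1 [Ps1 HPs1] phi2 [Ps2 HPs2]|i phi [Ps HPs]].
  - exists [Top Phi I]. intros b. exists (Top Phi I).
    split; [now left | intros M u h Hu; simpl; tauto].
  - exists [Top Phi I; Bot Phi I; Atom I p]. intros b.
    destruct (classic (entails (post A b) (Atom I p))) as [Hp | nHp];
      [|destruct (classic (entails (post A b) (Neg (Atom I p)))) as [Hn | nHn]].
    + exists (Top Phi I). split; [simpl; tauto|]. intros M u h Hu. simpl. tauto.
    + exists (Bot Phi I). split; [simpl; tauto|]. intros M u h Hu. simpl. tauto.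
    + exists (Atom I p). split; [simpl; tauto|]. intros M u h Hu. simpl. tauto.
  - exists (map (@Neg Phi I) Ps). intros b.
    destruct (HPs b) as [psi [Hin Rb]].
    exists (Neg psi). split; [now apply in_map|].
    intros M u h Hu. simpl. now rewrite (Rb M u h Hu).
  - exists (map (fun z => And (fst z) (snd z)) (list_prod Ps1 Ps2)). intros b.
    destruct (HPs1 b) as [psi1 [Hin1 Rb1]], (HPs2 b) as [psi2 [Hin2 Rb2]].
    exists (And psi1 psi2). split.
    + apply (in_map (fun z => And (fst z) (snd z)) _ (psi1, psi2)).
      now apply in_prod.
    + intros M u h Hu. simpl. now rewrite (Rb1 M u h Hu), (Rb2 M u h Hu).
  - destruct A_pre_finite as [Gs HGs].
    exists (map (guarded_boxes i) (sublists (list_prod Gs Ps))). intros b.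
    destruct (sublists_select (list_prod Gs Ps)
      (fun z => exists c, ARel A i b c /\ L (Iff (pre A c) (fst z)) /\
                          reduces c phi (snd z))) as [S [HS HSz]].
    exists (guarded_boxes i S). split; [now apply in_map|].
    apply reduces_Box.
    + intros g psi Hin. apply HSz in Hin. apply Hin.
    + intros c Rbc.
      destruct (HGs c) as [g [Hg Lc]], (HPs c) as [psi [Hpsi Rc]].
      exists g, psi. split; [|tauto].
      apply HSz. split; [now apply in_prod | now exists c].
Qed.

Lemma modeq_update {x x' : pmodel Phi I} {b}
    (h : psat x (pre A b)) (h' : psat x' (pre A b)) :
  validates (pm x) (pt x) -> validates (pm x') (pt x') -> modeq x x' ->
  modeq {| pm := update_model (pm x) A;
           pt := exist _ (pt x, b) h : St (update_model (pm x) A) |}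
        {| pm := update_model (pm x') A;
           pt := exist _ (pt x', b) h' : St (update_model (pm x') A) |}.
Proof.
  intros Hx Hx' Hxx' f. destruct (reducts_finite f) as [Ps HPs].
  destruct (HPs b) as [psi [_ Rb]]. unfold psat. simpl.
  rewrite (Rb _ _ h Hx), (Rb _ _ h' Hx'). apply Hxx'.
Qed.

End Reduction.

Lemma deterministic_modeq_action {Phi I : Type} {X : pmodel Phi I -> Prop}
    {A : amodel Phi I} {x x' a a'} :
  deterministic X A -> X x -> modeq x x' -> Gam A a -> Gam A a' ->
  psat x (pre A a) -> psat x' (pre A a') -> a = a'.
Proof.
  intros hdet Hx Hxx' Ga Ga' Ha Ha'.
  destruct (classic (a = a')) as [-> | ne]; [reflexivity|].
  assert (Hboth : psat x (And (pre A a) (pre A a')))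
    by (split; [exact Ha | now apply Hxx']).
  pose proof (hdet x Hx a a' Ga Ga' ne) as Hexcl.
  unfold psat in *. rewrite sat_Imp in Hexcl.
  now destruct (Hexcl Hboth).
Qed.

Theorem proposition32 (Phi I : Type)
  (hPhi : countable Phi) (nePhi : inhabited Phi)
  (hI : countable I) (neI : inhabited I)
  (X : pmodel Phi I -> Prop)
  (hXc : forall x, X x -> countable (St (pm x)))
  (L : form Phi I -> Prop) (hL : normal_logic L) (hsound : sound L X)
  (A : amodel Phi I) (hA : wf_amodel A) (hpf : pre_finite L A)
  (hcl : closing X A) (hdet : deterministic X A) (hex : exhaustive X A) :
  forall x, X x ->
    (exists y, updates x A y /\ X y) /\
    (forall x', mclass X x x' ->
       forall y y', updates x A y -> updates x' A y' -> mclass X y y').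
Proof.
  destruct hL as (_ & _ & _ & L_nec & _).
  intros x Hx. split.
  - destruct (hex x Hx) as [a [Ga h]].
    assert (Uy : updates x A {| pm := update_model (pm x) A;
                                pt := exist _ (pt x, a) h |})
      by now exists a, h.
    eexists. split; [exact Uy | exact (hcl x Hx _ Uy)].
  - intros x' [Hx' Hxx'] y y' Uy Uy'.
    split; [exact (hcl x' Hx' _ Uy')|].
    destruct Uy as (a & h & Ga & ->), Uy' as (a' & h' & Ga' & ->).
    destruct (deterministic_modeq_action hdet Hx Hxx' Ga Ga' h h').
    apply (modeq_update L_nec hpf h h'); [| | exact Hxx'];
      intros f Lf; now apply hsound.
Qed.
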